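(* There are infinitely many coprime pairs $(r,s)$ of integers $r,s\geq2$ such that $2c_{r,s}=c_{p,q}$ for some coprime integers $p,q\geq2$; that is, infinitely many of the rational vertex algebras $(\mathcal{L}_{c_{r,s}}^{\otimes 2})^{S_2}$ have a minimal (Virasoro) central charge. Likewise, there are infinitely many coprime pairs $(r,s)$, $r,s\ge2$, such that $3c_{r,s}=c_{p,q}$ for some coprime integers $p,q\geq 2$; that is, infinitely many of the vertex algebras $(\mathcal{L}_{c_{r,s}}^{\otimes 3})^{\mathbb{Z}_3}$ have a minimal central charge.
   Context: For coprime integers $p,q\geq2$, $c_{p,q}=1-\frac{6(p-q)^2}{pq}$ (a minimal central charge). $\mathcal{L}_c$ is the simple Virasoro vertex operator algebra of central charge $c$; $(\mathcal{L}_c^{\otimes 2})^{S_2}$ and $(\mathcal{L}_c^{\otimes 3})^{\mathbb{Z}_3}$ are the fixed-point subalgebras under permutation of tensor factors (resp. cyclic permutation), with central charges $2c$ and $3c$. *)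

From mathcomp Require Import all_boot all_order all_algebra.
Set Implicit Arguments. Unset Strict Implicit. Unset Printing Implicit Defensive.
Import Order.TTheory GRing.Theory Num.Theory.
Local Open Scope ring_scope.

Definition cmin (p q : nat) : rat :=
  1 - 6%:R * (p%:R - q%:R) ^+ 2 / (p%:R * q%:R).

Definition is_minimal_cc (c : rat) : Prop :=
  exists p q : nat, [/\ (2 <= p)%N, (2 <= q)%N, coprime p q & c = cmin p q].

From mathcomp Require Import all_boot all_order all_algebra.
From mathcomp.algebra_tactics Require Import ring lra.
From mathcomp.zify Require Import zify.
Set Implicit Arguments. Unset Strict Implicit. Unset Printing Implicit Defensive.
Import Order.TTheory GRing.Theory Num.Theory.

(* Since c_{p,q} = 13 - 6 (p/q + q/p), the condition k c_{r,s} = c_{p,q} reads, for t = r/s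
   and y = p/q,
                 y + 1/y = k (t + 1/t) - 13 (k - 1) / 6.                          (★)
   This quartic relation has genus one: a rational map (X, W) |-> (t, y) sends the points of
   an elliptic curve W^2 = X^3 + A X^2 + B X + C onto solutions of (★).  Each curve has a point
   P0 whose X-coordinate has 2-adic valuation -2 j0 < 0, and doubling lowers this valuation by
   exactly 2, so the points 2^n P0 give solutions with v2(t) = m0 + j0 + n, i.e. with numerators
   r >= 2^(m0 + j0 + n).  An elementary size argument shows that once r >= 2000 none of
   r, s, p, q equals 1, so t = r/s in lowest terms is an admissible pair, and r is unbounded. *)

(* The relation k c_{r,s} = c_{p,q} with all denominators cleared (see [cc_relation_of_star]). *)
Definition cc_relation (k r s p q : nat) : Prop :=
  6 * r * s * (p ^ 2 + q ^ 2) + 13 * (k - 1) * p * q * r * s = 6 * k * p * q * (r ^ 2 + s ^ 2).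

Lemma cc_relation_swap_rs k r s p q : cc_relation k r s p q -> cc_relation k s r p q.
Proof. rewrite /cc_relation; lia. Qed.

Lemma cc_relation_swap_pq k r s p q : cc_relation k r s p q -> cc_relation k r s q p.
Proof. rewrite /cc_relation; lia. Qed.

Lemma coprime_dvd_of_eq (a b N Y X : nat) :
  coprime a b -> N * b ^ 2 + a * Y = a * X -> a %| N.
Proof.
move=> cab E.
have : a %| N * b ^ 2 by rewrite -(dvdn_addl _ (dvdn_mulr Y (dvdnn a))) E dvdn_mulr.
by rewrite Gauss_dvdl // coprimeXr.
Qed.

Lemma edivn_unique (P x y u v : nat) :
  u < P -> v < P -> x * P + u = y * P + v -> x = y /\ u = v.
Proof.
move=> uP vP E.
have euv : u = v by rewrite -(modn_small uP) -(modn_small vP) -(modnMDl x) E modnMDl.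
split=> //; move: E; rewrite euv => /addIn /eqP.
by rewrite eqn_mul2r gtn_eqF ?(leq_ltn_trans _ uP) // => /eqP.
Qed.

(* Both a and b divide 6r,
   so a b <= 6 r; together with the size of the relation this forces b <= 2 and a > 36, and the
   relation, read as (6a + 13(k-1)b) (a r) + 6 r b^2 = 6kbr (a r) + 6kab with both remainders
   below a r, splits into two equations that are incompatible. *)
Lemma no_integral_t_sorted (k r a b : nat) : (k = 2 \/ k = 3) -> 2000 <= r ->
  0 < b -> b <= a -> coprime a b -> ~ cc_relation k r 1 a b.
Proof.
move=> hk hr hb hba cab E; rewrite /cc_relation in E.
have a_dvd : a %| 6 * r.
  by apply: (coprime_dvd_of_eq (Y := 6 * r * a + 13 * (k - 1) * b * r)
                               (X := 6 * k * b * (r ^ 2 + 1)) cab); lia.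
have b_dvd : b %| 6 * r.
  have cba : coprime b a by rewrite coprime_sym.
  by apply: (coprime_dvd_of_eq (Y := 6 * r * b + 13 * (k - 1) * a * r)
                               (X := 6 * k * a * (r ^ 2 + 1)) cba); lia.
have ab_le : a * b <= 6 * r by apply: dvdn_leq; [lia | rewrite Gauss_dvd // a_dvd].
have ar : 0 < a * r by rewrite muln_gt0; apply/andP; split; lia.
have lin : 12 * b * r <= 12 * a + 26 * b.
  have sq : r * b ^ 2 <= r * a ^ 2 by rewrite leq_mul2l leq_exp2r // hba orbT.
  by rewrite -(leq_pmul2r ar); case: hk => ?; subst k; lia.
have b2 : b <= 2.
  have blin : b * (12 * b * r) <= b * (12 * a + 26 * b) by rewrite leq_mul2l lin orbT.
  have rb : 2000 * b ^ 2 <= r * b ^ 2 by rewrite leq_mul2r hr orbT.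
  rewrite leqNgt; apply/negP => b3.
  have : 9 * r <= b ^ 2 * r by rewrite leq_mul2r -mulnn (leq_mul b3 b3) orbT.
  lia.
have big_a : 37 <= a.
  have : r <= b * r by rewrite leq_pmull.
  lia.
have [q1 q2] : 6 * k * b * r = 6 * a + 13 * (k - 1) * b /\ 6 * k * a * b = 6 * r * b ^ 2.
  apply: (@edivn_unique (a * r)); last by lia.
  - have : a * b <= a * 2 by rewrite leq_mul2l b2 orbT.
    have : a * 2000 <= a * r by rewrite leq_mul2l hr orbT.
    by case: hk => ?; subst k; lia.
  - have : r * b ^ 2 <= r * 4 by rewrite leq_mul2l -mulnn (leq_mul b2 b2) orbT.
    have : 37 * r <= a * r by rewrite leq_mul2r big_a orbT.
    lia.
have kab : k * a = r * b.
  by apply/eqP; rewrite -(@eqn_pmul2l (6 * b)) //; apply/eqP; lia.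
have : 2000 * b <= r * b by rewrite leq_mul2r hr orbT.
by case: hk => ?; subst k; lia.
Qed.

Lemma no_integral_t (k r p q : nat) : (k = 2 \/ k = 3) -> 2000 <= r ->
  0 < p -> 0 < q -> coprime p q -> ~ cc_relation k r 1 p q.
Proof.
move=> hk hr hp hq cpq; case: (leqP q p) => hqp.
  exact: no_integral_t_sorted.
move/cc_relation_swap_pq; apply: no_integral_t_sorted => //; first exact: ltnW.
by rewrite coprime_sym.
Qed.

(* Now a b divides 6km,
   which bounds b <= 10 and gives 6b < m; the relation, read as
   (6bm + 13(k-1)b) (a m) + 6ab = 6ka (a m) + 6kmb^2,
   again splits into two incompatible equations. *)
Lemma no_integral_y_sorted (k a b m : nat) : (k = 2 \/ k = 3) -> 2000 <= a ->
  0 < b -> b <= a -> 0 < m -> coprime a b -> ~ cc_relation k a b m 1.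
Proof.
move=> hk ha hb hba hm cab E; rewrite /cc_relation in E.
have a_dvd : a %| 6 * k * m.
  by apply: (coprime_dvd_of_eq (Y := 6 * k * m * a)
               (X := b * (6 * (m ^ 2 + 1) + 13 * (k - 1) * m)) cab); lia.
have b_dvd : b %| 6 * k * m.
  have cba : coprime b a by rewrite coprime_sym.
  by apply: (coprime_dvd_of_eq (Y := 6 * k * m * b)
               (X := a * (6 * (m ^ 2 + 1) + 13 * (k - 1) * m)) cba); lia.
have ab_le : a * b <= 6 * k * m.
  by apply: dvdn_leq; [case: hk => ?; subst k; lia | rewrite Gauss_dvd // a_dvd].
have am : 0 < a * m by rewrite muln_gt0; apply/andP; split; lia.
have lin : b * m <= 2 * k * a.
  have sq : m * b ^ 2 <= m * a ^ 2 by rewrite leq_mul2l leq_exp2r // hba orbT.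
  by rewrite -(leq_pmul2r am); case: hk => ?; subst k; lia.
have b10 : b <= 10.
  have blin : b * (b * m) <= b * (2 * k * a) by rewrite leq_mul2l lin orbT.
  rewrite leqNgt; apply/negP => b11.
  have : 121 * m <= b ^ 2 * m by rewrite leq_mul2r -mulnn (leq_mul b11 b11) orbT.
  by case: hk => ?; subst k; lia.
have [q1 q2] : 6 * b * m + 13 * (k - 1) * b = 6 * k * a /\ 6 * a * b = 6 * k * m * b ^ 2.
  apply: (@edivn_unique (a * m)); last by lia.
  - have : 2000 * b <= a * b by rewrite leq_mul2r ha orbT.
    have hbm : 6 * b < m by case: hk => ?; subst k; lia.
    have : a * (6 * b) < a * m by rewrite ltn_pmul2l //; lia.
    lia.
  - have : m * b ^ 2 <= m * 100 by rewrite leq_mul2l -mulnn (leq_mul b10 b10) orbT.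
    have : m * 2000 <= m * a by rewrite leq_mul2l ha orbT.
    by case: hk => ?; subst k; lia.
have amb : a = k * m * b.
  by apply/eqP; rewrite -(@eqn_pmul2l (6 * b)) //; apply/eqP; lia.
have : b <= b * m by rewrite leq_pmulr.
by case: hk => ?; subst k; lia.
Qed.

Lemma no_integral_y (k r s m : nat) : (k = 2 \/ k = 3) -> 2000 <= r ->
  0 < s -> 0 < m -> coprime r s -> ~ cc_relation k r s m 1.
Proof.
move=> hk hr hs hm crs; case: (leqP s r) => hsr.
  exact: no_integral_y_sorted.
move/cc_relation_swap_rs; apply: no_integral_y_sorted => //; try lia.
by rewrite coprime_sym.
Qed.

Local Open Scope ring_scope.

Definition two_integral (u : rat) : Prop :=
  exists c d : int, odd `|d|%N /\ u = c%:~R / d%:~R.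
Definition two_unit (u : rat) : Prop :=
  exists a b : int, [/\ odd `|a|%N, odd `|b|%N & u = a%:~R / b%:~R].

Definition v2_eq (x : rat) (e : int) : Prop := exists2 u, two_unit u & x = 2 ^ e * u.
Definition v2_ge (x : rat) (e : int) : Prop := exists2 u, two_integral u & x = 2 ^ e * u.

Lemma odd_intr_neq0 (a : int) : odd `|a|%N -> (a%:~R : rat) != 0.
Proof. by rewrite intr_eq0; apply: contraTneq => ->. Qed.

Lemma two_integral_int (z : int) : two_integral z%:~R.
Proof. by exists z, 1; rewrite divr1. Qed.

Lemma two_unit_integral u : two_unit u -> two_integral u.
Proof. by case=> a [b [_ ob ->]]; exists a, b. Qed.

Lemma two_integralM u w : two_integral u -> two_integral w -> two_integral (u * w).
Proof.
case=> c [d [od ->]] [c' [d' [od' ->]]]; exists (c * c'), (d * d').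
rewrite abszM oddM od od' !rmorphM; split=> //=.
by field; rewrite !odd_intr_neq0.
Qed.

Lemma two_integralD u w : two_integral u -> two_integral w -> two_integral (u + w).
Proof.
case=> c [d [od ->]] [c' [d' [od' ->]]]; exists (c * d' + c' * d), (d * d').
rewrite abszM oddM od od' rmorphD !rmorphM; split=> //=.
by field; rewrite !odd_intr_neq0.
Qed.

Lemma two_unitM u w : two_unit u -> two_unit w -> two_unit (u * w).
Proof.
case=> a [b [oa ob ->]] [a' [b' [oa' ob' ->]]]; exists (a * a'), (b * b').
rewrite !abszM !oddM oa ob oa' ob' !rmorphM; split=> //=.
by field; rewrite !odd_intr_neq0.
Qed.

Lemma two_unitV u : two_unit u -> two_unit u^-1.
Proof. by case=> a [b [oa ob ->]]; exists b, a; rewrite invf_div. Qed.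

Lemma two_unit_neq0 u : two_unit u -> u != 0.
Proof. by case=> a [b [oa ob ->]]; rewrite mulf_neq0 ?invr_eq0 ?odd_intr_neq0. Qed.

Lemma two_unitN u : two_unit u -> two_unit (- u).
Proof. by case=> a [b [oa ob ->]]; exists (- a), b; rewrite abszN rmorphN mulNr. Qed.

Lemma odd_absz_addr_even (x y : int) : odd (absz (x + 2 * y)%R) = odd (absz x).
Proof.
have : (absz (x + 2 * y)%R %% 2 = absz x %% 2)%N by lia.
by rewrite !modn2; do 2 case: odd.
Qed.

Lemma two_unitD2 u w : two_unit u -> two_integral w -> two_unit (u + 2 * w).
Proof.
case=> a [b [oa ob ->]] [c [d [od ->]]]; exists (a * d + 2 * (c * b)), (b * d).
rewrite odd_absz_addr_even !abszM !oddM oa ob od rmorphD !rmorphM; split=> //=.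
by field; rewrite !odd_intr_neq0.
Qed.

Lemma two_neq0 : (2 : rat) != 0. Proof. by []. Qed.

Lemma two_integral_pow2 (n : nat) : two_integral (2 ^ n%:Z).
Proof. by exists (2 ^+ n), 1; rewrite divr1 rmorphXn. Qed.

Lemma int_gap (e f : int) : e <= f -> exists n : nat, f = e + n%:Z.
Proof. by move=> h; exists (absz (f - e)); rewrite abszE ger0_norm ?subr_ge0 //; ring. Qed.

Lemma v2_eq_ge x e : v2_eq x e -> v2_ge x e.
Proof. by case=> u /two_unit_integral; exists u. Qed.

Lemma v2_ge_int (z : int) : v2_ge z%:~R 0.
Proof. by exists z%:~R; rewrite ?expr0z ?mul1r //; exact: two_integral_int. Qed.

Lemma v2_eq_neq0 x e : v2_eq x e -> x != 0.
Proof. by case=> u /two_unit_neq0 u0 ->; rewrite mulf_neq0 // expfz_neq0. Qed.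

Lemma v2_eqN x e : v2_eq x e -> v2_eq (- x) e.
Proof. by case=> u /two_unitN hu ->; exists (- u); rewrite // mulrN. Qed.

Lemma v2_eqM x y e f : v2_eq x e -> v2_eq y f -> v2_eq (x * y) (e + f).
Proof.
case=> u hu -> [w hw ->]; exists (u * w); first exact: two_unitM.
by rewrite expfzDr // mulrACA.
Qed.

Lemma v2_geM x y e f : v2_ge x e -> v2_ge y f -> v2_ge (x * y) (e + f).
Proof.
case=> u hu -> [w hw ->]; exists (u * w); first exact: two_integralM.
by rewrite expfzDr // mulrACA.
Qed.

Lemma v2_eqV x e : v2_eq x e -> v2_eq x^-1 (- e).
Proof. by case=> u /two_unitV hu ->; exists u^-1; rewrite // invfM invr_expz. Qed.

Lemma v2_eqX x e (n : nat) : v2_eq x e -> v2_eq (x ^+ n) (n%:Z * e).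
Proof.
move=> hx; elim: n => [|n IH].
  by exists 1; [exists 1, 1 | rewrite expr0 mul0r expr0z mulr1].
by rewrite exprS -addn1 PoszD mulrDl mul1r addrC; apply: v2_eqM.
Qed.

Lemma v2_ge_le x e f : v2_ge x f -> e <= f -> v2_ge x e.
Proof.
case=> u hu -> /int_gap [n ->]; exists (2 ^ n%:Z * u); last by rewrite expfzDr // mulrA.
exact: two_integralM (two_integral_pow2 n) hu.
Qed.

Lemma v2_geD x y e : v2_ge x e -> v2_ge y e -> v2_ge (x + y) e.
Proof.
case=> u hu -> [w hw ->]; exists (u + w); first exact: two_integralD.
by rewrite mulrDr.
Qed.

Lemma v2_eqD x y e f : v2_eq x e -> v2_ge y f -> e < f -> v2_eq (x + y) e.
Proof.
case=> u hu -> [w hw ->]; rewrite -lezD1 => /int_gap [n ->].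
exists (u + 2 * (2 ^ n%:Z * w)); last by rewrite !expfzDr // expr1z; ring.
by apply: two_unitD2 hu _; exact: two_integralM (two_integral_pow2 n) hw.
Qed.

Lemma v2_eq_int (z a : int) (n : nat) : odd `|a|%N -> z = 2 ^+ n * a -> v2_eq z%:~R n%:Z.
Proof. by move=> oa ->; exists a%:~R; [exists a, 1; rewrite divr1 | rewrite rmorphM rmorphXn]. Qed.

Lemma v2_eq_odd (n : nat) : odd n -> v2_eq n%:R 0.
Proof. by move=> on; apply: (@v2_eq_int n n 0); rewrite ?expr0 ?mul1r. Qed.

Lemma v2_eq0M x y : v2_eq x 0 -> v2_eq y 0 -> v2_eq (x * y) 0.
Proof. by move=> hx hy; have := v2_eqM hx hy; rewrite addr0. Qed.

Lemma v2_eq_ratio (a b : rat) (n : nat) : v2_eq a 0 -> v2_eq b 0 ->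
  v2_eq (a / (2 ^+ n * b)) (- n%:Z).
Proof.
move=> ha hb; have v2n : v2_eq (2 ^+ n) n%:Z.
  by have := @v2_eq_int (2 ^+ n) 1 n isT (esym (mulr1 _)); rewrite rmorphXn.
by congr v2_eq: (v2_eqM ha (v2_eqV (v2_eqM v2n hb))); rewrite add0r addr0.
Qed.

(* Uniqueness: a unit of Z_(2) is never twice an element of Z_(2). *)
Lemma v2_eq_unique x e f : v2_eq x e -> v2_eq x f -> e = f.
Proof.
wlog lt_ef : e f / e < f => [hwlog hxe hxf|].
  by case: (ltgtP e f) => // lt; [exact: hwlog | symmetry; exact: hwlog].
case=> u hu -> [w /two_unit_integral hw]; move: lt_ef; rewrite -lezD1 => /int_gap [n ->].
rewrite !expfzDr // expr1z -!mulrA => /(mulfI (expfz_neq0 _ two_neq0)) E.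
have hv : two_integral (- (2 ^ n%:Z * w)).
  rewrite -mulN1r; apply: two_integralM (two_integral_int (-1)) _.
  exact: two_integralM (two_integral_pow2 n) hw.
have := two_unit_neq0 (two_unitD2 hu hv).
by rewrite E mulrN subrr eqxx.
Qed.

Lemma v2_eq_exists x : x != 0 -> exists e, v2_eq x e.
Proof.
move=> x0.
have num_gt0 : (0 < `|numq x|)%N by rewrite absz_gt0 numq_eq0.
have den_gt0 : (0 < `|denq x|)%N by rewrite absz_gt0 denq_neq0.
have [m om En] := pfactor_coprime (isT : prime 2) num_gt0.
have [m' om' Ed] := pfactor_coprime (isT : prime 2) den_gt0.
rewrite coprime2n in om; rewrite coprime2n in om'.
set a := logn 2 _ in En; set b := logn 2 _ in Ed.
pose sm : int := (-1) ^+ (numq x < 0)%R * m%:Z.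
exists (a%:Z - b%:Z), (sm%:~R / m'%:~R); first by exists sm, m'%:Z; rewrite abszMsign.
rewrite -[x]divq_num_den [numq x]intEsign -[denq x]gtz0_abs ?denq_gt0 // En Ed.
rewrite expfzDr // -invr_expz !PoszM /sm !rmorphM /= -!exprnP -!pmulrn !natrX.
have m'0 : (m'%:R : rat) != 0 by rewrite pnatr_eq0; apply: contraTneq om' => ->.
by field; rewrite m'0 expf_neq0.
Qed.

(* A rational of valuation n >= 0 has a numerator divisible by 2^n, hence at least 2^n. *)
Lemma v2_eq_numq x (n : nat) : v2_eq x n%:Z -> (2 ^ n <= `|numq x|)%N.
Proof.
move=> hx; case: (hx) => _ [a [b [oa ob ->]]] Ex.
have E : numq x * b = 2 ^+ n * a * denq x.
  apply: (@intr_inj rat); rewrite !rmorphM /= rmorphXn /=.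
  have d0 : ((denq x)%:~R : rat) != 0 by rewrite intr_eq0 denq_neq0.
  rewrite -(mulfVK d0 (numq x)%:~R) divq_num_den Ex -exprnP.
  by field; rewrite odd_intr_neq0.
apply: dvdn_leq; first by rewrite absz_gt0 numq_eq0 (v2_eq_neq0 hx).
have : (2 ^ n %| `|numq x| * `|b|)%N by rewrite -abszM E !abszM abszX -mulnA dvdn_mulr.
by rewrite Gauss_dvdl // coprimeXl // coprime2n.
Qed.

Lemma v2_ge0 e : v2_ge 0 e.
Proof. by exists 0; [exact: (two_integral_int 0) | rewrite mulr0]. Qed.

(* A monic integral polynomial of degree n, evaluated at a point of negative valuation e,
   has valuation n e: the leading term dominates. *)
Lemma v2_eq_monic (n : nat) (c : nat -> int) (X : rat) (e : int) : e < 0 -> v2_eq X e ->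
  v2_eq (X ^+ n + \sum_(i < n) (c i)%:~R * X ^+ i) (n%:Z * e).
Proof.
move=> e_neg hX; apply: (v2_eqD (v2_eqX n hX) (f := n%:Z * e - e)); last by lia.
apply: (big_ind (fun y => v2_ge y (n%:Z * e - e))) => [|y z|i _]; first exact: v2_ge0.
  exact: v2_geD.
apply: v2_ge_le (v2_geM (v2_ge_int (c i)) (v2_eq_ge (v2_eqX i hX))) _.
have := ltn_ord i; nia.
Qed.

(* The cubic f(X) = X^3 + A X^2 + B X + C with integer coefficients, its derivative, and the
   duplication formula for the curve W^2 = f(X):
     X(2P) = (X^4 - 2B X^2 - 8C X + B^2 - 4AC) / (4 f(X)),
     W(2P) = (f'(X) (X - X(2P)) - 2 f(X)) / (2W). *)
Definition cubic (A B C : int) (X : rat) : rat :=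
  X ^+ 3 + A%:~R * X ^+ 2 + B%:~R * X + C%:~R.
Definition cubic' (A B : int) (X : rat) : rat := 3 * X ^+ 2 + 2 * A%:~R * X + B%:~R.
Definition dbl_num (A B C : int) (X : rat) : rat :=
  X ^+ 4 - 2 * B%:~R * X ^+ 2 - 8 * C%:~R * X + (B ^+ 2 - 4 * A * C)%:~R.
Definition dbl_x (A B C : int) (X : rat) : rat := dbl_num A B C X / (4 * cubic A B C X).
Definition dbl_y (A B C : int) (X W : rat) : rat :=
  (cubic' A B X * (X - dbl_x A B C X) - 2 * cubic A B C X) / (2 * W).
Definition double (A B C : int) (P : rat * rat) : rat * rat :=
  (dbl_x A B C P.1, dbl_y A B C P.1 P.2).

Lemma double_on_curve A B C X W : W ^+ 2 = cubic A B C X -> cubic A B C X != 0 ->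
  dbl_y A B C X W ^+ 2 = cubic A B C (dbl_x A B C X).
Proof.
move=> hW f0; have W0 : W != 0 by apply: contraNneq f0 => W0; rewrite -hW W0 expr0n.
rewrite /dbl_y expr_div_n exprMn hW.
move: f0; rewrite /dbl_x /dbl_num /cubic' /cubic => f0.
by field; rewrite f0.
Qed.

Lemma v2_cubic A B C X e : e < 0 -> v2_eq X e -> v2_eq (cubic A B C X) (3 * e).
Proof.
move=> e_neg hX; have := v2_eq_monic 3 (nth 0 [:: C; B; A]) e_neg hX.
by rewrite !big_ord_recr big_ord0 /= /cubic; congr v2_eq; ring.
Qed.

Lemma v2_dbl_num A B C X e : e < 0 -> v2_eq X e -> v2_eq (dbl_num A B C X) (4 * e).
Proof.
move=> e_neg hX.
have := v2_eq_monic 4 (nth 0 [:: B ^+ 2 - 4 * A * C; - 8 * C; - 2 * B; 0]) e_neg hX.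
by rewrite !big_ord_recr big_ord0 /= /dbl_num; congr v2_eq; rewrite ?rmorphM ?rmorphN /=; ring.
Qed.

Lemma v2_dbl_x A B C X e : e < 0 -> v2_eq X e -> v2_eq (dbl_x A B C X) (e - 2).
Proof.
move=> e_neg hX; rewrite /dbl_x; have v4 : v2_eq 4 2 by apply: (@v2_eq_int 4 1 2).
have := v2_eqM (v2_dbl_num A B C e_neg hX) (v2_eqV (v2_eqM v4 (v2_cubic A B C e_neg hX))).
by congr v2_eq; ring.
Qed.

Lemma v2_on_curve A B C X W e : W ^+ 2 = cubic A B C X -> e < 0 -> v2_eq X (2 * e) ->
  v2_eq W (3 * e).
Proof.
move=> hW e_neg hX.
have hf : v2_eq (W ^+ 2) (3 * (2 * e)) by rewrite hW; apply: v2_cubic => //; lia.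
have W0 : W != 0 by apply: contraNneq (v2_eq_neq0 hf) => ->; rewrite expr0n.
have [g hg] := v2_eq_exists W0.
have := v2_eq_unique (v2_eqX 2 hg) hf.
by move=> E; congr v2_eq: hg; lia.
Qed.

Lemma iter_double A B C X0 Y0 (j0 : nat) : (0 < j0)%N ->
  Y0 ^+ 2 = cubic A B C X0 -> v2_eq X0 (2 * - j0%:Z) ->
  forall n, let P := iter n (double A B C) (X0, Y0) in
    P.2 ^+ 2 = cubic A B C P.1 /\ v2_eq P.1 (2 * - (j0 + n)%:Z).
Proof.
move=> j0_gt0 hY hX; elim=> [|n [IHc IHv]] /=; first by rewrite addn0.
have neg : 2 * - (j0 + n)%:Z < 0 by lia.
split; first by apply: double_on_curve IHc (v2_eq_neq0 (v2_cubic A B C neg IHv)).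
by congr v2_eq: (v2_dbl_x A B C neg IHv); lia.
Qed.

(* Writing c_{r,s} = 13 - 6 (t + 1/t) with t = r/s, the relation k c_{r,s} = c_{p,q} becomes,
   for y = p/q, the relation [star k t y]. *)
Definition star (k : nat) (t y : rat) : Prop :=
  y + y^-1 = k%:R * (t + t^-1) - 13 * (k%:R - 1) / 6.

Definition good_pair (k r s : nat) : Prop :=
  [/\ (2 <= r)%N, (2 <= s)%N, coprime r s & is_minimal_cc (k%:R * cmin r s)].

Lemma cmin_ratio (a b : nat) : (0 < a)%N -> (0 < b)%N ->
  cmin a b = 13 - 6 * (a%:R / b%:R + (a%:R / b%:R)^-1).
Proof.
rewrite /cmin -!(ltr0n rat) => /lt0r_neq0 a0 /lt0r_neq0 b0.
by field; apply/andP.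
Qed.

Section StarForRatios.
Variables (k r s p q : nat).
Hypotheses (r_gt0 : (0 < r)%N) (s_gt0 : (0 < s)%N) (p_gt0 : (0 < p)%N) (q_gt0 : (0 < q)%N).
Hypothesis hstar : star k (r%:R / s%:R) (p%:R / q%:R).

Lemma cmin_of_star : k%:R * cmin r s = cmin p q.
Proof. by rewrite !cmin_ratio // hstar; set T := _ + _^-1; field. Qed.

Lemma cc_relation_of_star : (0 < k)%N -> cc_relation k r s p q.
Proof.
move=> k_gt0; apply/eqP; rewrite -(eqr_nat rat) !(natrD, natrM, natrX, natrB) //.
move: r_gt0 s_gt0 p_gt0 q_gt0 hstar; rewrite -!(ltr0n rat) /star.
move=> /lt0r_neq0 r0 /lt0r_neq0 s0 /lt0r_neq0 p0 /lt0r_neq0 q0 E.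
(* LHS - RHS is 6 p q r s times the difference of the two sides of (★). *)
rewrite -subr_eq0 -(mulr0 (6 * p%:R * q%:R * r%:R * s%:R)).
rewrite -(subrr (p%:R / q%:R + (p%:R / q%:R)^-1)) {2}E; apply/eqP.
by field; rewrite p0 q0 r0 s0.
Qed.

End StarForRatios.

(* For k = 2, 3 the right-hand side of (★) is positive when t > 0, hence so is y. *)
Lemma star_pos (k : nat) (t y : rat) : (k = 2 \/ k = 3)%N -> 0 < t -> star k t y -> 0 < y.
Proof.
move=> hk t_gt0 E.
have amgm : 2 <= t + t^-1.
  have : 0 <= (t - 1) ^+ 2 / t by rewrite divr_ge0 ?sqr_ge0 ?ltW.
  have -> : (t - 1) ^+ 2 / t = t + t^-1 - 2 by field; rewrite gt_eqF.
  by rewrite subr_ge0.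
have : 0 < y + y^-1 by rewrite E; case: hk => ->; lra.
by apply: contraTT; rewrite -!leNgt => y_le0; rewrite -[0]addr0 lerD // invr_le0.
Qed.

Lemma ratio_numq_denq (t : rat) : 0 < t -> t = (`|numq t|%N)%:R / (`|denq t|%N)%:R.
Proof.
move=> t_gt0; rewrite -[LHS]divq_num_den -[numq t]gtz0_abs ?numq_gt0 //.
by rewrite -[denq t]gtz0_abs ?denq_gt0.
Qed.

(* A positive solution (t, y) of (★) whose numerator r is at least 2000 gives a good pair:
   none of r, s, p, q can be 1 by [no_integral_t] and [no_integral_y]. *)
Lemma good_pair_of_solution (k : nat) (t y : rat) : (k = 2 \/ k = 3)%N ->
  0 < t -> 0 < y -> star k t y -> (2000 <= `|numq t|)%N -> good_pair k `|numq t| `|denq t|.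
Proof.
move=> hk t_gt0 y_gt0 E r_big.
have [Et Ey] := (ratio_numq_denq t_gt0, ratio_numq_denq y_gt0).
have [r_gt0 s_gt0] : (0 < `|numq t|)%N /\ (0 < `|denq t|)%N.
  by rewrite !absz_gt0 denq_neq0 numq_eq0 gt_eqF.
have [p_gt0 q_gt0] : (0 < `|numq y|)%N /\ (0 < `|denq y|)%N.
  by rewrite !absz_gt0 denq_neq0 numq_eq0 gt_eqF.
have [crs cpq] := (coprime_num_den t, coprime_num_den y).
set r := `|numq t|%N in Et r_big r_gt0 crs *; set s := `|denq t|%N in Et s_gt0 crs *.
set p := `|numq y|%N in Ey p_gt0 cpq; set q := `|denq y|%N in Ey q_gt0 cpq.
rewrite Et Ey in E.
have rel : cc_relation k r s p q.
  by apply: cc_relation_of_star => //; case: hk => ->.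
have ge2 (n : nat) : (0 < n)%N -> n <> 1%N -> (2 <= n)%N by case: n => [|[|]].
split=> //; first exact: leq_trans r_big.
  by apply: ge2 => // s1; move: rel; rewrite s1; exact: no_integral_t.
exists p, q; split=> //; last exact: cmin_of_star.
  by apply: ge2 => // p1; move/cc_relation_swap_pq: rel; rewrite p1; exact: no_integral_y.
by apply: ge2 => // q1; move: rel; rewrite q1; exact: no_integral_y.
Qed.

(* (★) for t = N / D and y = N Z / (D kap), multiplied by 6 kap N D Z. *)
Definition star_cleared (k : nat) (kap N D Z : rat) : rat :=
  6 * (N ^+ 2 * Z ^+ 2 + kap ^+ 2 * D ^+ 2) - 6 * k%:R * kap * (N ^+ 2 * Z + D ^+ 2 * Z)
  + 13 * (k%:R - 1) * kap * D * N * Z.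

Lemma star_of_cleared (k : nat) (kap N D Z : rat) :
  kap != 0 -> N != 0 -> D != 0 -> Z != 0 -> star_cleared k kap N D Z = 0 ->
  star k (N / D) (N * Z / (D * kap)).
Proof.
move=> kap0 N0 D0 Z0 E.
have M0 : 6 * kap * N * D * Z != 0 by rewrite !mulf_neq0.
apply: (mulIf M0); apply/eqP; rewrite -subr_eq0 -E; apply/eqP.
by rewrite /star_cleared; field; rewrite kap0 N0 D0 Z0.
Qed.

Lemma mul_lt0_of_div_lt0 (a b : rat) : a / b < 0 -> a * b < 0.
Proof.
move=> h; have b0 : b != 0 by apply: contraTneq h => ->; rewrite invr0 mulr0 ltxx.
have -> : a * b = (a / b) * b ^+ 2 by field.
by rewrite pmulr_llt0 // exprn_even_gt0.
Qed.

(* A model of (★): a curve W^2 = f(X) together with a rational map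
   (X, W) |-> (t, y) = (N / D, N Z / (D kap)),  N = mu (X + nu), D = W + lam (X + al), Z = X + al,
   sending curve points to solutions of (★).  The sign condition guarantees that one of the two
   points (X, W), (X, -W) gives t > 0. *)
Section CurveModel.
Variables (k : nat) (A B C mu nu lam al kap : int) (m0 : nat).
Hypothesis k23 : (k = 2 \/ k = 3)%N.
Hypotheses (mu_gt0 : 0 < mu) (lam_gt0 : 0 < lam) (kap_gt0 : 0 < kap).
Hypothesis v2_mu : v2_eq mu%:~R m0%:Z.

Let N X : rat := mu%:~R * (X + nu%:~R).
Let D X W : rat := W + lam%:~R * (X + al%:~R).
Let Z X : rat := X + al%:~R.

Hypothesis curve_star : forall X W, W ^+ 2 = cubic A B C X ->
  star_cleared k kap%:~R (N X) (D X W) (Z X) = 0.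
Hypothesis curve_sign : forall X, (X + nu%:~R) * (X + al%:~R) < 0 ->
  (lam%:~R * (X + al%:~R)) ^+ 2 < cubic A B C X.

Section PointOfValuation.
Variables (X W : rat) (j : nat).
Hypotheses (j_gt0 : (0 < j)%N) (v2X : v2_eq X (2 * - j%:Z)) (v2W : v2_eq W (3 * - j%:Z)).

Lemma v2_Z : v2_eq (Z X) (2 * - j%:Z).
Proof. by apply: v2_eqD v2X (v2_ge_int al) _; lia. Qed.

Lemma v2_N : v2_eq (N X) (m0%:Z + 2 * - j%:Z).
Proof. by apply: v2_eqM v2_mu (v2_eqD v2X (v2_ge_int nu) _); lia. Qed.

Lemma v2_D : v2_eq (D X W) (3 * - j%:Z).
Proof. by apply: v2_eqD v2W (v2_geM (v2_ge_int lam) (v2_eq_ge v2_Z)) _; lia. Qed.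

Lemma v2_t : v2_eq (N X / D X W) (m0 + j)%:Z.
Proof. by congr v2_eq: (v2_eqM v2_N (v2_eqV v2_D)); lia. Qed.

Lemma star_of_point : W ^+ 2 = cubic A B C X ->
  star k (N X / D X W) (N X * Z X / (D X W * kap%:~R)).
Proof.
move=> hW; apply: star_of_cleared (curve_star hW).
- by rewrite intr_eq0 gt_eqF.
- exact: v2_eq_neq0 v2_N.
- exact: v2_eq_neq0 v2_D.
- exact: v2_eq_neq0 v2_Z.
Qed.

End PointOfValuation.

(* Of the two points (X, W) and (X, -W), one gives t > 0: if both gave t < 0, then
   N^2 (L^2 - W^2) > 0 and N L < 0 for L = lam (X + al), contradicting the sign condition. *)
Lemma t_pos_branch X W : W ^+ 2 = cubic A B C X -> N X / D X W != 0 -> N X / D X (- W) != 0 ->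
  0 < N X / D X W \/ 0 < N X / D X (- W).
Proof.
move=> hW t0 t0'.
have [|le1] := ltP 0 (N X / D X W); first by left.
have [|le2] := ltP 0 (N X / D X (- W)); first by right.
exfalso; set L := lam%:~R * (X + al%:~R).
have /mul_lt0_of_div_lt0 neg1 : N X / D X W < 0 by rewrite lt_neqAle t0.
have /mul_lt0_of_div_lt0 neg2 : N X / D X (- W) < 0 by rewrite lt_neqAle t0'.
have N0 : N X != 0 by apply: contraNneq t0 => ->; rewrite mul0r.
have W2_lt : W ^+ 2 < L ^+ 2.
  have : 0 < N X ^+ 2 * (L ^+ 2 - W ^+ 2).
    have -> : N X ^+ 2 * (L ^+ 2 - W ^+ 2) = (N X * D X W) * (N X * D X (- W)).
      by rewrite /D /L; ring.
    by rewrite nmulr_rgt0.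
  by rewrite pmulr_rgt0 ?exprn_even_gt0 // subr_gt0.
have NL_lt0 : (mu * lam)%:~R * ((X + nu%:~R) * (X + al%:~R)) < 0.
  have -> : (mu * lam)%:~R * ((X + nu%:~R) * (X + al%:~R)) = (N X * D X W + N X * D X (- W)) / 2.
    by rewrite /N /D /L rmorphM /=; field.
  by rewrite pmulr_llt0 ?invr_gt0 //; lra.
have sign_neg : (X + nu%:~R) * (X + al%:~R) < 0.
  by move: NL_lt0; rewrite pmulr_rlt0 // ltr0z mulr_gt0.
by move: (curve_sign sign_neg); rewrite -hW -/L => /(lt_trans W2_lt); rewrite ltxx.
Qed.

Lemma good_pair_of_point X W (j : nat) : (11 <= j)%N -> W ^+ 2 = cubic A B C X ->
  v2_eq X (2 * - j%:Z) -> exists r s : nat, (2 ^ (m0 + j) <= r)%N /\ good_pair k r s.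
Proof.
move=> j_ge hW v2X; have j_gt0 : (0 < j)%N by apply: leq_trans j_ge.
have v2W : v2_eq W (3 * - j%:Z) by apply: v2_on_curve hW _ v2X; lia.
wlog t_gt0 : W hW v2W / 0 < N X / D X W => [hwlog|].
  have hW' : (- W) ^+ 2 = cubic A B C X by rewrite sqrrN.
  have v2W' := v2_eqN v2W.
  have [|] := t_pos_branch hW (v2_eq_neq0 (v2_t j_gt0 v2X v2W)) (v2_eq_neq0 (v2_t j_gt0 v2X v2W')).
    exact: hwlog.
  exact: hwlog hW' v2W'.
have E := star_of_point j_gt0 v2X v2W hW.
have r_big := v2_eq_numq (v2_t j_gt0 v2X v2W).
exists (absz (numq (N X / D X W))), (absz (denq (N X / D X W))); split=> //.
have r_ge : (2000 <= 2 ^ (m0 + j))%N.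
  by apply: (@leq_trans (2 ^ 11)) => //; rewrite leq_exp2l //; lia.
exact: good_pair_of_solution k23 t_gt0 (star_pos k23 t_gt0 E) E (leq_trans r_ge r_big).
Qed.

Variables (X0 Y0 : rat) (j0 : nat).
Hypotheses (j0_gt0 : (0 < j0)%N) (on_curve0 : Y0 ^+ 2 = cubic A B C X0).
Hypothesis v2_X0 : v2_eq X0 (2 * - j0%:Z).

Lemma unbounded_good_pairs n : exists r s : nat, (n < r)%N /\ good_pair k r s.
Proof.
have [onc v2P] := iter_double j0_gt0 on_curve0 v2_X0 (n + 11).
have j_ge : (11 <= j0 + (n + 11))%N by lia.
have [r [s [r_big good]]] := good_pair_of_point j_ge onc v2P.
exists r, s; split=> //; apply: leq_trans r_big.
apply: leq_trans (ltn_expl n (isT : (1 < 2)%N)) _; rewrite leq_exp2l //; lia.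
Qed.

End CurveModel.

Lemma good_pairs_not_in_list (k : nat) :
  (forall n, exists r s : nat, (n < r)%N /\ good_pair k r s) ->
  forall l : seq (nat * nat), exists r s : nat,
    [/\ (r, s) \notin l, (2 <= r)%N, (2 <= s)%N, coprime r s & is_minimal_cc (k%:R * cmin r s)].
Proof.
move=> unbounded l; have [r [s [r_big [r2 s2 crs hmin]]]] := unbounded (\max_(x <- l) x.1)%N.
exists r, s; split=> //; apply: contraTN r_big => rs_in.
by rewrite -leqNgt (leq_bigmax_seq (F := fun x => x.1) _ rs_in).
Qed.

Definition X0_2 : rat := - (9%:R * 17%:R * 23%:R * 97%:R) / (2 ^+ 4 * 121%:R).
Definition Y0_2 : rat := (9%:R * 5%:R * 13%:R * 31%:R * 9137%:R) / (2 ^+ 6 * 1331%:R).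

(* On the curve, the cleared form of (★) factors through W^2 - f(X). *)
Lemma curve_star_2 X W : W ^+ 2 = cubic 313 (120 * 120) (1440 * 1440) X ->
  star_cleared 2 288%:~R (24%:~R * (X + 144%:~R)) (W + 13%:~R * (X + 288%:~R)) (X + 288%:~R) = 0.
Proof.
move=> hW; have -> : star_cleared 2 288%:~R (24%:~R * (X + 144%:~R)) (W + 13%:~R * (X + 288%:~R))
    (X + 288%:~R) = (W ^+ 2 - cubic 313 (120 * 120) (1440 * 1440) X)
                    * (6 * 288 ^+ 2 - 12 * 288 * (X + 288)).
  by rewrite /star_cleared /cubic; ring.
by rewrite hW subrr mul0r.
Qed.

(* f(X) - (13 (X + 288))^2 = (X + 144) (X + 288) (X - 288) > 0 on (-288, -144). *)
Lemma curve_sign_2 X : (X + 144%:~R) * (X + 288%:~R) < 0 ->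
  (13%:~R * (X + 288%:~R)) ^+ 2 < cubic 313 (120 * 120) (1440 * 1440) X.
Proof.
move=> neg; rewrite -subr_lt0.
have -> : (13%:~R * (X + 288%:~R)) ^+ 2 - cubic 313 (120 * 120) (1440 * 1440) X =
  - ((X + 144%:~R) * (X + 288%:~R)) * (X - 288) by rewrite /cubic; ring.
rewrite pmulr_rlt0 ?oppr_gt0 // subr_lt0 ltNge; apply: contraTN neg => X_ge.
by rewrite -leNgt; apply: mulr_ge0; lra.
Qed.

Lemma on_curve_2 : Y0_2 ^+ 2 = cubic 313 (120 * 120) (1440 * 1440) X0_2.
Proof. by rewrite /Y0_2 /X0_2 /cubic; field. Qed.

Lemma v2_X0_2 : v2_eq X0_2 (2 * - 2%:Z).
Proof.
rewrite /X0_2 mulNr; apply/v2_eqN/v2_eq_ratio.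
all: by do ![apply: v2_eq0M | exact: v2_eq_odd].
Qed.

Lemma good_pairs_2 n : exists r s : nat, (n < r)%N /\ good_pair 2 r s.
Proof.
have v2_mu : v2_eq 24%:~R 3%:Z by apply: (@v2_eq_int 24 3 3).
exact: (@unbounded_good_pairs 2 313 (120 * 120) (1440 * 1440) 24 144 13 288 288 3
  (or_introl erefl) isT isT isT v2_mu curve_star_2 curve_sign_2 X0_2 Y0_2 2 isT on_curve_2 v2_X0_2).
Qed.

Definition X0_3 : rat := - (9%:R * 7%:R * 17%:R) / 2 ^+ 2.
Definition Y0_3 : rat := (9%:R * 13%:R * 269%:R) / 2 ^+ 3.

(* On the curve, the cleared form of (★) factors through W^2 - f(X). *)
Lemma curve_star_3 X W : W ^+ 2 = cubic 1180 (512 * 81 * 11) (256 * 81 * 81 * 43) X ->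
  star_cleared 3 432%:~R (36%:~R * (X + 504%:~R)) (W + 26%:~R * (X + 648%:~R)) (X + 648%:~R) = 0.
Proof.
move=> hW; have -> : star_cleared 3 432%:~R (36%:~R * (X + 504%:~R)) (W + 26%:~R * (X + 648%:~R))
    (X + 648%:~R) = (W ^+ 2 - cubic 1180 (512 * 81 * 11) (256 * 81 * 81 * 43) X)
                    * (6 * 432 ^+ 2 - 18 * 432 * (X + 648)).
  by rewrite /star_cleared /cubic; ring.
by rewrite hW subrr mul0r.
Qed.

(* f(X) - (26 (X + 648))^2 = (X + 504) (X + 648) (X - 648) > 0 on (-648, -504). *)
Lemma curve_sign_3 X : (X + 504%:~R) * (X + 648%:~R) < 0 ->
  (26%:~R * (X + 648%:~R)) ^+ 2 < cubic 1180 (512 * 81 * 11) (256 * 81 * 81 * 43) X.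
Proof.
move=> neg; rewrite -subr_lt0.
have -> : (26%:~R * (X + 648%:~R)) ^+ 2 - cubic 1180 (512 * 81 * 11) (256 * 81 * 81 * 43) X =
  - ((X + 504%:~R) * (X + 648%:~R)) * (X - 648) by rewrite /cubic; ring.
rewrite pmulr_rlt0 ?oppr_gt0 // subr_lt0 ltNge; apply: contraTN neg => X_ge.
by rewrite -leNgt; apply: mulr_ge0; lra.
Qed.

Lemma on_curve_3 : Y0_3 ^+ 2 = cubic 1180 (512 * 81 * 11) (256 * 81 * 81 * 43) X0_3.
Proof. by rewrite /Y0_3 /X0_3 /cubic; field. Qed.

Lemma v2_X0_3 : v2_eq X0_3 (2 * - 1%:Z).
Proof.
rewrite /X0_3 mulNr -[2 ^+ 2]mulr1; apply/v2_eqN/v2_eq_ratio; last exact: (@v2_eq_odd 1).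
by do ![apply: v2_eq0M | exact: v2_eq_odd].
Qed.

Lemma good_pairs_3 n : exists r s : nat, (n < r)%N /\ good_pair 3 r s.
Proof.
have v2_mu : v2_eq 36%:~R 2%:Z by apply: (@v2_eq_int 36 9 2).
exact: (@unbounded_good_pairs 3 1180 (512 * 81 * 11) (256 * 81 * 81 * 43) 36 504 26 648 432 2
  (or_intror erefl) isT isT isT v2_mu curve_star_3 curve_sign_3 X0_3 Y0_3 1 isT on_curve_3 v2_X0_3).
Qed.

Theorem proposition8p3 :
  (forall l : seq (nat * nat), exists r s : nat,
     [/\ (r, s) \notin l, (2 <= r)%N, (2 <= s)%N, coprime r s &
         is_minimal_cc (2%:R * cmin r s)]) /\
  (forall l : seq (nat * nat), exists r s : nat,
     [/\ (r, s) \notin l, (2 <= r)%N, (2 <= s)%N, coprime r s &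
         is_minimal_cc (3%:R * cmin r s)]).
Proof.
by split; apply: good_pairs_not_in_list; [exact: good_pairs_2 | exact: good_pairs_3].
Qed.
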